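(* Let $a,c,p\in\mathbb{C}$ with $-c\notin\mathbb{N}\cup\{0\}$ and $c\neq2$. Write $\cosh(pz)M(a,c;z)=\sum_{n=0}^\infty u_nz^n$, $z\in\mathbb{C}$. Then $u_0=1$, $u_1=\frac ac$, $u_2=\frac{a(a+1)}{2c(c+1)}+\frac{p^2}{2}$, $u_3=\frac{ap^2}{2c}+\frac{a(a+1)(a+2)}{6c(c+1)(c+2)}$, $u_4=\frac{a(a+1)p^2}{4c(c+1)}+\frac{a(a+1)(a+2)(a+3)}{24c(c+1)(c+2)(c+3)}+\frac{p^4}{24}$, $u_5=\frac{ap^4}{24c}+\frac{a(a+1)(a+2)p^2}{12c(c+1)(c+2)}+\frac{a(a+1)(a+2)(a+3)(a+4)}{120c(c+1)(c+2)(c+3)(c+4)}$, and for all integers $n\ge5$, \[ u_{n+1}=\sum_{i=0}^5\beta_i(n)u_{n-i}, \] where, with $D(n)=(c-2)c\,n(n+1)(c+n-1)(c+n)$, \[ \beta_0(n)=\frac{2\left(a\left(c^2-2cn+c-2(n-2)^2\right)+c(n-1)(2c+n-5)\right)}{(c-2)c(n+1)(c+n)}, \] \[ \beta_1(n)=\frac{1}{D(n)}\Big[(n-4)(n-3)(n-2)(n-1)(4p^2-1)+2(n-3)(n-2)(n-1)\big(4a+c(4p^2-3)\big) +(n-2)(n-1)\big(8a^2+a(4c+6)+c(6(c-2)p^2-6c+1)\big) +2(n-1)\big(a^2(4c-2)-3a(c-1)c+(c-2)c(c+1)p^2\big) +(c-2)\big(-a^2(c+2)+ac+c^2(c+1)p^2\big)\Big],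 \] \[ \beta_2(n)=\frac{1}{D(n)}\Big[2p^2(c-3)\big(a(3c+8)-2c^2+c-32\big)+2p^2\big(n(10a+c(31-3c)-104)-6(c-6)n^2-4n^3\big) -2(a+n-3)\big(2a^2-a(c-2n+3)-(n-2)(2c+n-4)\big)\Big], \] \[ \beta_3(n)=-\frac{1}{D(n)}\Big[p^2\big(-12a^2+2a(6c+5)-6c^2+c\big)+2(n-3)\big(a+c(4p^2-3)p^2\big) +(a-1)a+5(c-2)cp^4+(n-4)(n-3)(8p^4-6p^2+1)\Big], \] \[ \beta_4(n)=\frac{2p^2\left(p^2(-6a+5c+4(n-4))+3a-2c-n+4\right)}{D(n)},\qquad \beta_5(n)=\frac{4p^6-5p^4+p^2}{D(n)}. \]
   Context: For $a\in\mathbb{C}$, $(a)_n=a(a+1)\cdots(a+n-1)$ denotes the Pochhammer symbol, with $(a)_0=1$. For $a,c\in\mathbb{C}$ with $-c\notin\mathbb{N}\cup\{0\}$, the confluent hypergeometric (Kummer) function is $M(a,c;z)=\sum_{n=0}^\infty \frac{(a)_n}{(c)_n\,n!}z^n$, $z\in\mathbb{C}$. *)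

From Stdlib Require Import Reals Factorial.
From Coquelicot Require Import Coquelicot.
Open Scope C_scope.

Definition Cn (n : nat) : C := RtoC (INR n).

Fixpoint poch (a : C) (n : nat) : C :=
  match n with
  | O => 1
  | S m => poch a m * (a + Cn m)
  end.

Definition Cfact (n : nat) : C := Cn (fact n).

Definition Cpsum (coef : nat -> C) (z : C) : C :=
  lim (T := C_CompleteNormedModule)
      (filtermap (fun N => sum_n (fun k => coef k * z ^ k) N) eventually).

Definition kummer_coef (a c : C) (n : nat) : C :=
  poch a n / (poch c n * Cfact n).

Definition KummerM (a c z : C) : C := Cpsum (kummer_coef a c) z.

Definition Cexp (w : C) : C := Cpsum (fun k => 1 / Cfact k) w.
Definition Ccosh (w : C) : C := (Cexp w + Cexp (- w)) / RtoC 2%R.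

Definition Dn (a c p : C) (n : nat) : C :=
  let N := Cn n in (c - Cn 2) * c * N * (N + 1) * (c + N - 1) * (c + N).

Definition beta0 (a c p : C) (n : nat) : C :=
  let N := Cn n in
  Cn 2 * (a * (c ^ 2 - Cn 2 * c * N + c - Cn 2 * (N - Cn 2) ^ 2)
           + c * (N - 1) * (Cn 2 * c + N - Cn 5))
  / ((c - Cn 2) * c * (N + 1) * (c + N)).

Definition beta1 (a c p : C) (n : nat) : C :=
  let N := Cn n in
  ((N - Cn 4) * (N - Cn 3) * (N - Cn 2) * (N - 1) * (Cn 4 * p ^ 2 - 1)
   + Cn 2 * (N - Cn 3) * (N - Cn 2) * (N - 1) * (Cn 4 * a + c * (Cn 4 * p ^ 2 - Cn 3))
   + (N - Cn 2) * (N - 1)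
       * (Cn 8 * a ^ 2 + a * (Cn 4 * c + Cn 6)
          + c * (Cn 6 * (c - Cn 2) * p ^ 2 - Cn 6 * c + 1))
   + Cn 2 * (N - 1)
       * (a ^ 2 * (Cn 4 * c - Cn 2) - Cn 3 * a * (c - 1) * c
          + (c - Cn 2) * c * (c + 1) * p ^ 2)
   + (c - Cn 2) * (- a ^ 2 * (c + Cn 2) + a * c + c ^ 2 * (c + 1) * p ^ 2))
  / Dn a c p n.

Definition beta2 (a c p : C) (n : nat) : C :=
  let N := Cn n in
  (Cn 2 * p ^ 2 * (c - Cn 3) * (a * (Cn 3 * c + Cn 8) - Cn 2 * c ^ 2 + c - Cn 32)
   + Cn 2 * p ^ 2 * (N * (Cn 10 * a + c * (Cn 31 - Cn 3 * c) - Cn 104)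
                     - Cn 6 * (c - Cn 6) * N ^ 2 - Cn 4 * N ^ 3)
   - Cn 2 * (a + N - Cn 3)
       * (Cn 2 * a ^ 2 - a * (c - Cn 2 * N + Cn 3) - (N - Cn 2) * (Cn 2 * c + N - Cn 4)))
  / Dn a c p n.

Definition beta3 (a c p : C) (n : nat) : C :=
  let N := Cn n in
  - ((p ^ 2 * (- (Cn 12 * a ^ 2) + Cn 2 * a * (Cn 6 * c + Cn 5) - Cn 6 * c ^ 2 + c)
      + Cn 2 * (N - Cn 3) * (a + c * (Cn 4 * p ^ 2 - Cn 3) * p ^ 2)
      + (a - 1) * a + Cn 5 * (c - Cn 2) * c * p ^ 4
      + (N - Cn 4) * (N - Cn 3) * (Cn 8 * p ^ 4 - Cn 6 * p ^ 2 + 1))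
     / Dn a c p n).

Definition beta4 (a c p : C) (n : nat) : C :=
  let N := Cn n in
  Cn 2 * p ^ 2 * (p ^ 2 * (- (Cn 6 * a) + Cn 5 * c + Cn 4 * (N - Cn 4))
                  + Cn 3 * a - Cn 2 * c - N + Cn 4)
  / Dn a c p n.

Definition beta5 (a c p : C) (n : nat) : C :=
  (Cn 4 * p ^ 6 - Cn 5 * p ^ 4 + p ^ 2) / Dn a c p n.

Definition beta (a c p : C) (i n : nat) : C :=
  match i with
  | 0 => beta0 a c p n
  | 1 => beta1 a c p n
  | 2 => beta2 a c p n
  | 3 => beta3 a c p n
  | 4 => beta4 a c p n
  | _ => beta5 a c p n
  end.

From Stdlib Require Import Reals Factorial Lia Lra.
From Coquelicot Require Import Coquelicot.
Open Scope C_scope.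

(* With e(z) = cosh(pz) and m(z) = M(a,c;z) we have e'' = p^2 e and Kummer's equation
   z m'' + (c - z) m' = a m.  Hence the products F = e m, G = e' m, H = e m', W = e' m'
   satisfy the closed first-order system
     F' = G + H,   G' = p^2 F + W,
     z H' + c H = z (W + H) + a F,   z W' + c W = z (p^2 H + W) + a G,
   which on Taylor coefficients expresses F, G, H, W at index k + 1 through their values
   at index k.  Unrolling it from index n - 5 writes F_(n-5), ..., F_(n+1) as rational
   functions of the four values at index n - 5, and the recurrence is the linear relation
   among these seven functions.  The series u is identified with the Cauchy product of the
   Taylor coefficients of e and m by Mertens' theorem and uniqueness of power-series
   coefficients on the real line. *)

Lemma Cn_S n : Cn (S n) = Cn n + 1.
Proof. unfold Cn. now rewrite S_INR, RtoC_plus. Qed.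

Lemma Cn_0 : Cn 0 = 0.
Proof. reflexivity. Qed.

Lemma Cn_plus m n : Cn (m + n) = Cn m + Cn n.
Proof. unfold Cn. now rewrite plus_INR, RtoC_plus. Qed.

Lemma Cn_neq_0 n : n <> 0%nat -> Cn n <> 0.
Proof. intros Hn E. apply (not_0_INR n Hn). exact (f_equal fst E). Qed.

Lemma Cfact_S n : Cfact (S n) = Cn (S n) * Cfact n.
Proof. unfold Cfact, Cn. now rewrite <- RtoC_mult, <- mult_INR. Qed.

Lemma Cfact_neq_0 n : Cfact n <> 0.
Proof. apply Cn_neq_0, fact_neq_0. Qed.

Lemma Cmod_Cfact n : Cmod (Cfact n) = INR (fact n).
Proof. unfold Cfact, Cn. rewrite Cmod_R. apply Rabs_pos_eq, pos_INR. Qed.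

Lemma Cmod_Cn n : Cmod (Cn n) = INR n.
Proof. unfold Cn. rewrite Cmod_R. apply Rabs_pos_eq, pos_INR. Qed.

Lemma Cplus_Cn_neq_0 (c : C) : (forall k, c <> - Cn k) -> forall n, c + Cn n <> 0.
Proof.
  intros hc n E. apply (hc n). replace c with (c + Cn n - Cn n) by ring. rewrite E. ring.
Qed.

(* Coquelicot's sums over C, restated with [Cplus] and [Cmult] so that the goals they produce
   are equations in [C], as [ring] and [field] require. *)

Lemma sum_n_Cext (f g : nat -> C) n :
  (forall k, (k <= n)%nat -> f k = g k) -> sum_n f n = sum_n g n.
Proof. exact (sum_n_ext_loc f g n). Qed.

Lemma sum_n_CS (f : nat -> C) n : sum_n f (S n) = sum_n f n + f (S n).
Proof. exact (sum_Sn f n). Qed.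

Lemma sum_n_Cplus (f g : nat -> C) n :
  sum_n (fun k => f k + g k) n = sum_n f n + sum_n g n.
Proof. exact (sum_n_plus f g n). Qed.

Lemma sum_n_Cmult_l (l : C) (f : nat -> C) n :
  sum_n (fun k => l * f k) n = l * sum_n f n.
Proof. exact (sum_n_mult_l (K := C_Ring) l f n). Qed.

Lemma sum_n_S_first (f : nat -> C) n : sum_n f (S n) = f O + sum_n (fun k => f (S k)) n.
Proof. unfold sum_n. rewrite sum_Sn_m by lia. now rewrite sum_n_m_S. Qed.

Definition cauchy_prod (x y : nat -> C) (n : nat) : C :=
  sum_n (fun k => x k * y (n - k)%nat) n.

Definition deriv_coef (x : nat -> C) (k : nat) : C := Cn (S k) * x (S k).

Lemma cauchy_prod_ext (x x' y y' : nat -> C) n :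
  (forall k, x k = x' k) -> (forall k, y k = y' k) ->
  cauchy_prod x y n = cauchy_prod x' y' n.
Proof. intros Hx Hy. apply sum_n_Cext. intros k _. now rewrite Hx, Hy. Qed.

Lemma cauchy_prod_scal_l (l : C) (x y : nat -> C) n :
  cauchy_prod (fun k => l * x k) y n = l * cauchy_prod x y n.
Proof.
  unfold cauchy_prod. rewrite <- sum_n_Cmult_l. apply sum_n_Cext. intros k _. ring.
Qed.

Lemma cauchy_prod_linear_r (al be : C) (x y z : nat -> C) n :
  cauchy_prod x (fun k => al * y k + be * z k) n
  = al * cauchy_prod x y n + be * cauchy_prod x z n.
Proof.
  unfold cauchy_prod. rewrite <- !sum_n_Cmult_l, <- sum_n_Cplus.
  apply sum_n_Cext. intros k _. ring.
Qed.

Lemma cauchy_prod_shift_r (x y : nat -> C) n :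
  y O = 0 -> cauchy_prod x y (S n) = cauchy_prod x (fun k => y (S k)) n.
Proof.
  intros Hy0. unfold cauchy_prod.
  rewrite sum_n_CS, Nat.sub_diag, Hy0, Cmult_0_r, Cplus_0_r.
  apply sum_n_Cext. intros k Hk.
  now replace (S n - k)%nat with (S (n - k)) by lia.
Qed.

Lemma cauchy_prod_deriv (x y : nat -> C) n :
  Cn (S n) * cauchy_prod x y (S n)
  = cauchy_prod (deriv_coef x) y n + cauchy_prod x (deriv_coef y) n.
Proof.
  unfold cauchy_prod, deriv_coef. rewrite <- sum_n_Cmult_l.
  rewrite (sum_n_Cext _ (fun k => Cn k * (x k * y (S n - k)%nat)
             + Cn (S n - k) * (x k * y (S n - k)%nat))).
  2: { intros k Hk. rewrite <- Cmult_plus_distr_r, <- Cn_plus. do 3 f_equal. lia. }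
  rewrite sum_n_Cplus. f_equal.
  - rewrite sum_n_S_first, Cn_0, Cmult_0_l, Cplus_0_l.
    apply sum_n_Cext. intros k _. simpl (S n - S k)%nat. ring.
  - rewrite sum_n_CS, Nat.sub_diag, Cn_0, Cmult_0_l, Cplus_0_r.
    apply sum_n_Cext. intros k Hk.
    replace (S n - k)%nat with (S (n - k)) by lia. ring.
Qed.

Lemma cauchy_prod_kummer (a c : C) (x m : nat -> C) :
  (forall j, (c + Cn j) * deriv_coef m j = (a + Cn j) * m j) ->
  forall n, (Cn (S n) + c) * cauchy_prod x (deriv_coef m) (S n)
  = cauchy_prod (deriv_coef x) (deriv_coef m) n + cauchy_prod x (deriv_coef m) n
    + a * cauchy_prod x m (S n).
Proof.
  intros hm n.
  (* By Kummer's equation, c m' - a m = z (m' - m''). *)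
  assert (Hshift : c * cauchy_prod x (deriv_coef m) (S n) + - a * cauchy_prod x m (S n)
                   = 1 * cauchy_prod x (deriv_coef m) n
                     + - 1 * cauchy_prod x (deriv_coef (deriv_coef m)) n).
  { rewrite <- !cauchy_prod_linear_r, cauchy_prod_shift_r.
    - apply cauchy_prod_ext; [easy |]. intros k. pose proof (hm (S k)) as h.
      change (deriv_coef m k) with (Cn (S k) * m (S k)).
      change (deriv_coef (deriv_coef m) k) with (Cn (S k) * deriv_coef m (S k)).
      replace (c * deriv_coef m (S k)) with
        ((c + Cn (S k)) * deriv_coef m (S k) - Cn (S k) * deriv_coef m (S k)) by ring.
      rewrite h. ring.
    - pose proof (hm O) as h. rewrite Cn_0, !Cplus_0_r in h. rewrite h. ring. }
  rewrite Cmult_plus_distr_r, cauchy_prod_deriv.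
  replace (c * cauchy_prod x (deriv_coef m) (S n))
    with (c * cauchy_prod x (deriv_coef m) (S n) + - a * cauchy_prod x m (S n)
          + a * cauchy_prod x m (S n)) by ring.
  rewrite Hshift. ring.
Qed.

Definition cosh_coef (p : C) (k : nat) : C := (p ^ k + (- p) ^ k) / (RtoC 2 * Cfact k).

Lemma RtoC_2_neq_0 : RtoC 2 <> 0.
Proof. intros E. apply (f_equal fst) in E. simpl in E. lra. Qed.

Lemma deriv_coef2_cosh_coef p k :
  deriv_coef (deriv_coef (cosh_coef p)) k = p ^ 2 * cosh_coef p k.
Proof.
  unfold deriv_coef, cosh_coef. rewrite !Cfact_S, !Cpow_S.
  pose proof (Cn_neq_0 (S k) ltac:(lia)). pose proof (Cn_neq_0 (S (S k)) ltac:(lia)).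
  pose proof (Cfact_neq_0 k). pose proof RtoC_2_neq_0.
  field. auto.
Qed.

Lemma poch_neq_0 (c : C) : (forall k, c <> - Cn k) -> forall n, poch c n <> 0.
Proof.
  intros hc n. induction n as [|n IH]; simpl.
  - exact C1_nz.
  - apply Cmult_neq_0; [exact IH | now apply Cplus_Cn_neq_0].
Qed.

Lemma kummer_coef_deriv (a c : C) : (forall k, c <> - Cn k) -> forall n,
  (c + Cn n) * deriv_coef (kummer_coef a c) n = (a + Cn n) * kummer_coef a c n.
Proof.
  intros hc n. unfold deriv_coef, kummer_coef. rewrite Cfact_S. simpl poch.
  pose proof (Cn_neq_0 (S n) ltac:(lia)). pose proof (Cfact_neq_0 n).
  pose proof (poch_neq_0 c hc n). pose proof (Cplus_Cn_neq_0 c hc n).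
  field. auto.
Qed.

Ltac nonzero_from_hyps :=
  match goal with |- ?E <> _ =>
    match goal with h : ?Y <> _ |- _ =>
      let Ez := fresh in intros Ez; apply h; transitivity E; [ring | rewrite Ez; ring]
    end
  end.

Lemma recurrence_of_system (a c p : C) (F G H W : nat -> C)
  (hc : forall k, c <> - Cn k) (hc2 : c <> Cn 2)
  (RF : forall k, Cn (S k) * F (S k) = G k + H k)
  (RG : forall k, Cn (S k) * G (S k) = p ^ 2 * F k + W k)
  (RH : forall k, (Cn (S k) + c) * H (S k) = W k + H k + a * F (S k))
  (RW : forall k, (Cn (S k) + c) * W (S k) = p ^ 2 * H k + W k + a * G (S k))
  n : (5 <= n)%nat ->
  F (S n) = sum_n (fun i => beta a c p i n * F (n - i)%nat) 5.
Proof.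
  intros hn.
  assert (hS : forall k, Cn k + 1 <> 0) by (intros k; rewrite <- Cn_S; now apply Cn_neq_0).
  assert (hSc : forall k, Cn k + 1 + c <> 0).
  { intros k. rewrite <- Cn_S, Cplus_comm. now apply Cplus_Cn_neq_0. }
  assert (hF : forall k, F (S k) = (G k + H k) / (Cn k + 1)).
  { intros k. rewrite <- RF, Cn_S. field. apply hS. }
  assert (hG : forall k, G (S k) = (p ^ 2 * F k + W k) / (Cn k + 1)).
  { intros k. rewrite <- RG, Cn_S. field. apply hS. }
  assert (hH : forall k, H (S k) = (W k + H k + a * F (S k)) / (Cn k + 1 + c)).
  { intros k. rewrite <- RH, Cn_S. field. apply hSc. }
  assert (hW : forall k, W (S k) = (p ^ 2 * H k + W k + a * G (S k)) / (Cn k + 1 + c)).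
  { intros k. rewrite <- RW, Cn_S. field. apply hSc. }
  destruct n as [|[|[|[|[|N]]]]]; try lia.
  rewrite !sum_n_CS, sum_O. cbn [Nat.sub beta]. rewrite Nat.sub_0_r.
  unfold beta0, beta1, beta2, beta3, beta4, beta5, Dn; cbv zeta.
  assert (hc0 : c <> 0).
  { pose proof (Cplus_Cn_neq_0 c hc O) as h. now rewrite Cn_0, Cplus_0_r in h. }
  assert (hc_2 : c - Cn 2 <> 0).
  { intros E. apply hc2. replace c with (c - Cn 2 + Cn 2) by ring. rewrite E. ring. }
  pose proof (Cplus_Cn_neq_0 c hc (S (S (S (S N))))) as hcN4.
  pose proof (Cplus_Cn_neq_0 c hc (S (S (S (S (S N)))))) as hcN5.
  pose proof (hSc N) as hcN1. pose proof (hSc (S N)) as hcN2. pose proof (hSc (S (S N))) as hcN3.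
  pose proof (hS N) as hN1. pose proof (hS (S N)) as hN2. pose proof (hS (S (S N))) as hN3.
  pose proof (hS (S (S (S N)))) as hN4. pose proof (hS (S (S (S (S N))))) as hN5.
  pose proof (hS (S (S (S (S (S N)))))) as hN6.
  clear RF RG RH RW hS hSc hc.
  rewrite !Cn_S.
  (* Unroll the system down to index N: both sides become rational in F N, G N, H N, W N. *)
  repeat (rewrite hF || rewrite hG || rewrite hH || rewrite hW).
  clear hF hG hH hW.
  rewrite !Cn_S, !Cn_0 in *.
  field; repeat split; nonzero_from_hyps.
Qed.

Lemma cosh_kummer_recurrence (a c p : C) (hc : forall k, c <> - Cn k) (hc2 : c <> Cn 2) n :
  (5 <= n)%nat ->
  cauchy_prod (cosh_coef p) (kummer_coef a c) (S n)
  = sum_n (fun i => beta a c p i n * cauchy_prod (cosh_coef p) (kummer_coef a c) (n - i)%nat) 5.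
Proof.
  set (e := cosh_coef p). set (m := kummer_coef a c).
  assert (hm := kummer_coef_deriv a c hc).
  assert (he : forall x k, cauchy_prod (deriv_coef (deriv_coef e)) x k = p ^ 2 * cauchy_prod e x k).
  { intros x k. rewrite <- cauchy_prod_scal_l.
    apply cauchy_prod_ext; [apply deriv_coef2_cosh_coef | easy]. }
  apply (recurrence_of_system a c p (cauchy_prod e m) (cauchy_prod (deriv_coef e) m)
           (cauchy_prod e (deriv_coef m)) (cauchy_prod (deriv_coef e) (deriv_coef m)) hc hc2);
    intros k.
  - apply cauchy_prod_deriv.
  - now rewrite cauchy_prod_deriv, he.
  - now apply (cauchy_prod_kummer a c).
  - now rewrite (cauchy_prod_kummer a c), he.
Qed.

Ltac solve_initial_coef hc :=
  let hck := fresh in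
  pose proof (Cplus_Cn_neq_0 _ hc) as hck;
  pose proof (hck 0%nat); pose proof (hck 1%nat); pose proof (hck 2%nat);
  pose proof (hck 3%nat); pose proof (hck 4%nat); pose proof RtoC_2_neq_0; clear hck hc;
  unfold cauchy_prod, cosh_coef, kummer_coef, Cfact;
  rewrite ?sum_n_CS, sum_O; cbn [Nat.sub poch Cpow fact Nat.mul Nat.add];
  rewrite ?Cn_S, ?Cn_0 in *;
  field; repeat split; nonzero_from_hyps.

Local Notation is_Cseries := (@is_series C_AbsRing C_NormedModule).

Lemma is_series_Cpsum (coef : nat -> C) (z : C) :
  ex_series (fun k => Cmod (coef k * z ^ k)) ->
  is_Cseries (fun k => coef k * z ^ k) (Cpsum coef z).
Proof.
  intros Habs.
  destruct (ex_series_le (K := C_AbsRing) (V := C_CompleteNormedModule)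
              (fun k => coef k * z ^ k) _ (fun k => Rle_refl _) Habs) as [l Hl].
  replace (Cpsum coef z) with l; [exact Hl |].
  unfold Cpsum. set (F := filtermap _ eventually).
  assert (PF : ProperFilter F) by apply filtermap_proper_filter, eventually_filter.
  apply (is_filter_lim_unique (K := C_AbsRing) (V := C_NormedModule) (F := F)); [exact Hl |].
  intros P [eps Heps]. apply (filter_imp _ _ Heps).
  apply (complete_cauchy (T := C_CompleteNormedModule) F PF).
  intros e. exists l. apply Hl, locally_ball.
Qed.

Lemma Re_sum_n (s : nat -> C) n : Re (sum_n s n) = sum_n (fun k => Re (s k)) n.
Proof. induction n as [|n IH]; [now rewrite !sum_O | now rewrite !sum_Sn, <- IH]. Qed.

Lemma Im_sum_n (s : nat -> C) n : Im (sum_n s n) = sum_n (fun k => Im (s k)) n.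
Proof. induction n as [|n IH]; [now rewrite !sum_O | now rewrite !sum_Sn, <- IH]. Qed.

Lemma is_series_Re (s : nat -> C) (l : C) :
  is_Cseries s l -> is_series (fun n => Re (s n)) (Re l).
Proof.
  intros Hs. apply (filterlim_ext (fun N => Re (sum_n s N))); [apply Re_sum_n |].
  eapply filterlim_comp; [exact Hs |].
  intros P [eps Heps]. exists eps. intros w Hw. apply Heps, Hw.
Qed.

Lemma is_series_Im (s : nat -> C) (l : C) :
  is_Cseries s l -> is_series (fun n => Im (s n)) (Im l).
Proof.
  intros Hs. apply (filterlim_ext (fun N => Im (sum_n s N))); [apply Im_sum_n |].
  eapply filterlim_comp; [exact Hs |].
  intros P [eps Heps]. exists eps. intros w Hw. apply Heps, Hw.
Qed.

Lemma is_series_ReIm (s : nat -> C) (l : C) :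
  is_series (fun n => Re (s n)) (Re l) -> is_series (fun n => Im (s n)) (Im l) ->
  is_Cseries s l.
Proof.
  intros HRe HIm P [eps Heps]. unfold filtermap.
  apply (filter_imp (fun N => ball (Re l) eps (sum_n (fun n => Re (s n)) N)
                              /\ ball (Im l) eps (sum_n (fun n => Im (s n)) N))).
  - intros N [h1 h2]. apply Heps. rewrite <- Re_sum_n in h1. rewrite <- Im_sum_n in h2.
    now split.
  - apply filter_and; [apply HRe | apply HIm]; apply locally_ball.
Qed.

Lemma Re_cauchy_prod (x y : nat -> C) n :
  Re (cauchy_prod x y n)
  = (sum_f_R0 (fun k => Re (x k) * Re (y (n - k)%nat)) n
     - sum_f_R0 (fun k => Im (x k) * Im (y (n - k)%nat)) n)%R.
Proof.
  unfold cauchy_prod. rewrite Re_sum_n, sum_n_Reals, <- minus_sum.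
  apply sum_eq. intros k _. apply re_mult.
Qed.

Lemma Im_cauchy_prod (x y : nat -> C) n :
  Im (cauchy_prod x y n)
  = (sum_f_R0 (fun k => Re (x k) * Im (y (n - k)%nat)) n
     + sum_f_R0 (fun k => Im (x k) * Re (y (n - k)%nat)) n)%R.
Proof.
  unfold cauchy_prod. rewrite Im_sum_n, sum_n_Reals, <- plus_sum.
  apply sum_eq. intros k _. apply im_mult.
Qed.

Lemma ex_series_Rabs_of_Cmod (x : nat -> C) (f : C -> R) :
  (forall z, Rabs (f z) <= Cmod z) ->
  ex_series (fun n => Cmod (x n)) -> ex_series (fun n => Rabs (f (x n))).
Proof.
  intros Hf Hx. apply (ex_series_le (V := R_CompleteNormedModule) _ _) with (2 := Hx).
  intros n. change (Rabs (Rabs (f (x n))) <= Cmod (x n)). rewrite Rabs_Rabsolu. apply Hf.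
Qed.

Lemma Rabs_Im_le_Cmod (z : C) : Rabs (Im z) <= Cmod z.
Proof. eapply Rle_trans; [apply Rmax_r | apply Rmax_Cmod]. Qed.

Lemma is_series_cauchy_prod (x y : nat -> C) (lx ly : C) :
  is_Cseries x lx -> is_Cseries y ly ->
  ex_series (fun n => Cmod (x n)) -> ex_series (fun n => Cmod (y n)) ->
  is_Cseries (cauchy_prod x y) (lx * ly).
Proof.
  intros Hx Hy Ax Ay.
  assert (Mertens : forall f g : C -> R,
            (forall z, Rabs (f z) <= Cmod z) -> (forall z, Rabs (g z) <= Cmod z) ->
            is_series (fun n => f (x n)) (f lx) -> is_series (fun n => g (y n)) (g ly) ->
            is_series (fun n => sum_f_R0 (fun k => f (x k) * g (y (n - k)%nat)) n)%R
              (f lx * g ly)%R).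
  { intros f g Hf Hg Hfx Hgy.
    apply (is_series_mult (fun k => f (x k)) (fun k => g (y k))); [exact Hfx | exact Hgy | |];
      now apply ex_series_Rabs_of_Cmod. }
  pose proof (is_series_Re _ _ Hx) as Hxr. pose proof (is_series_Im _ _ Hx) as Hxi.
  pose proof (is_series_Re _ _ Hy) as Hyr. pose proof (is_series_Im _ _ Hy) as Hyi.
  apply is_series_ReIm.
  - eapply is_series_ext; [intros n; symmetry; apply Re_cauchy_prod |].
    rewrite re_mult.
    exact (is_series_minus _ _ _ _ (Mertens Re Re re_le_Cmod re_le_Cmod Hxr Hyr)
             (Mertens Im Im Rabs_Im_le_Cmod Rabs_Im_le_Cmod Hxi Hyi)).
  - eapply is_series_ext; [intros n; symmetry; apply Im_cauchy_prod |].
    rewrite im_mult.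
    exact (is_series_plus _ _ _ _ (Mertens Re Im re_le_Cmod Rabs_Im_le_Cmod Hxr Hyi)
             (Mertens Im Re Rabs_Im_le_Cmod re_le_Cmod Hxi Hyr)).
Qed.

Lemma cauchy_prod_pow (x y : nat -> C) (z : C) n :
  cauchy_prod (fun k => x k * z ^ k) (fun k => y k * z ^ k) n = cauchy_prod x y n * z ^ n.
Proof.
  unfold cauchy_prod. rewrite Cmult_comm, <- sum_n_Cmult_l.
  apply sum_n_Cext. intros k Hk.
  replace n with (k + (n - k))%nat at 3 by lia. rewrite Cpow_add_r. ring.
Qed.

Lemma pseries_coef_unique_R (x y : nat -> R) (L : R -> R) :
  (forall t, is_series (fun n => x n * t ^ n)%R (L t)) ->
  (forall t, is_series (fun n => y n * t ^ n)%R (L t)) ->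
  forall n, x n = y n.
Proof.
  assert (HL : forall z : nat -> R, (forall t, is_series (fun n => z n * t ^ n)%R (L t)) ->
             (forall t, PSeries z t = L t) /\ Rbar_lt 0 (CV_radius z)).
  { intros z Hz. split.
    - intros t. apply is_pseries_unique, is_pseries_R, Hz.
    - destruct (Rbar_lt_le_dec 0 (CV_radius z)) as [h | h]; [exact h | exfalso].
      apply (CV_disk_outside z 1).
      + eapply Rbar_le_lt_trans; [exact h |]. simpl. rewrite Rabs_R1. lra.
      + apply ex_series_lim_0. exists (L 1%R). eapply is_series_ext; [| apply Hz].
        intros k. simpl. now rewrite pow1, Rmult_1_r. }
  intros Hx Hy n. destruct (HL x Hx) as [Px Rx], (HL y Hy) as [Py Ry].
  apply PSeries_ext_recip; [exact Rx | exact Ry |].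
  apply filter_forall. intros t. now rewrite Px, Py.
Qed.

Lemma pseries_coef_unique (x y : nat -> C) (L : R -> C) :
  (forall t : R, is_Cseries (fun n => x n * RtoC t ^ n) (L t)) ->
  (forall t : R, is_Cseries (fun n => y n * RtoC t ^ n) (L t)) ->
  forall n, x n = y n.
Proof.
  intros Hx Hy n.
  assert (Hpart : forall z : nat -> C,
            (forall t : R, is_Cseries (fun n => z n * RtoC t ^ n) (L t)) -> forall t : R, is_series (fun n => Re (z n) * t ^ n)%R (Re (L t))
                          /\ is_series (fun n => Im (z n) * t ^ n)%R (Im (L t))).
  { intros z Hz t. split.
    - eapply is_series_ext; [| apply is_series_Re, Hz]. intros k. cbv beta.
      now rewrite <- RtoC_pow, re_scal_r.
    - eapply is_series_ext; [| apply is_series_Im, Hz]. intros k. cbv beta.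
      now rewrite <- RtoC_pow, im_scal_r. }
  apply injective_projections.
  - apply (pseries_coef_unique_R (fun n => Re (x n)) (fun n => Re (y n)) (fun t => Re (L t)));
      intros t; [apply (Hpart x Hx) | apply (Hpart y Hy)].
  - apply (pseries_coef_unique_R (fun n => Im (x n)) (fun n => Im (y n)) (fun t => Im (L t)));
      intros t; [apply (Hpart x Hx) | apply (Hpart y Hy)].
Qed.

Lemma is_pseries_C (u : nat -> C) (z l : C) :
  is_pseries u z l -> is_Cseries (fun k => u k * z ^ k) l.
Proof. apply is_series_ext. intros k. apply Cmult_comm. Qed.

Lemma ex_series_pow_div_fact (r : R) : ex_series (fun k => r ^ k / INR (fact k))%R.
Proof.
  exists (exp r). apply (is_series_ext (fun k => / INR (fact k) * r ^ k)%R).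
  - intros k. apply Rmult_comm.
  - apply is_pseries_R, is_exp_Reals.
Qed.

Lemma is_series_Cexp (w : C) : is_Cseries (fun k => 1 / Cfact k * w ^ k) (Cexp w).
Proof.
  apply is_series_Cpsum.
  apply (ex_series_ext (fun k => Cmod w ^ k / INR (fact k))%R); [| apply ex_series_pow_div_fact].
  intros k. rewrite Cmod_mult, Cmod_div, Cmod_1, Cmod_Cfact, Cmod_pow by apply Cfact_neq_0.
  unfold Rdiv. rewrite Rmult_1_l. apply Rmult_comm.
Qed.

Lemma is_series_Ccosh (p z : C) :
  is_Cseries (fun k => cosh_coef p k * z ^ k) (Ccosh (p * z)).
Proof.
  pose proof (is_series_scal (/ RtoC 2) _ _
                (is_series_plus _ _ _ _ (is_series_Cexp (p * z)) (is_series_Cexp (- (p * z)))))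
    as H.
  unfold Ccosh. replace ((Cexp (p * z) + Cexp (- (p * z))) / RtoC 2)
    with (/ RtoC 2 * (Cexp (p * z) + Cexp (- (p * z)))) by (unfold Cdiv; ring).
  eapply is_series_ext; [| exact H]. intros k.
  change (/ RtoC 2 * (1 / Cfact k * (p * z) ^ k + 1 / Cfact k * (- (p * z)) ^ k)
          = cosh_coef p k * z ^ k).
  replace (- (p * z)) with (- p * z) by ring. rewrite !Cpow_mult_l. unfold cosh_coef.
  pose proof (Cfact_neq_0 k). pose proof RtoC_2_neq_0. field. auto.
Qed.

Lemma Cmod_cosh_coef_le (p : C) k : (Cmod (cosh_coef p k) <= Cmod p ^ k / INR (fact k))%R.
Proof.
  pose proof (INR_fact_lt_0 k).
  unfold cosh_coef. rewrite Cmod_div, Cmod_mult, Cmod_Cfact, Cmod_R, Rabs_pos_eq by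
    (lra || (apply Cmult_neq_0; [apply RtoC_2_neq_0 | apply Cfact_neq_0])).
  apply (Rle_trans _ (2 * Cmod p ^ k / (2 * INR (fact k)))).
  - apply Rmult_le_compat_r; [apply Rlt_le, Rinv_0_lt_compat; lra |].
    eapply Rle_trans; [apply Cmod_triangle |]. rewrite !Cmod_pow, Cmod_opp. lra.
  - right. field. lra.
Qed.

Lemma ex_series_Cmod_cosh_coef (p z : C) : ex_series (fun k => Cmod (cosh_coef p k * z ^ k)).
Proof.
  apply (ex_series_le (V := R_CompleteNormedModule) _ _)
    with (2 := ex_series_pow_div_fact (Cmod p * Cmod z)).
  intros k. change (Rabs (Cmod (cosh_coef p k * z ^ k)) <= (Cmod p * Cmod z) ^ k / INR (fact k))%R.
  rewrite Rabs_pos_eq, Cmod_mult, Cmod_pow, Rpow_mult_distr by apply Cmod_ge_0.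
  replace (Cmod p ^ k * Cmod z ^ k / INR (fact k))%R
    with (Cmod p ^ k / INR (fact k) * Cmod z ^ k)%R by (unfold Rdiv; ring).
  apply Rmult_le_compat_r; [apply pow_le, Cmod_ge_0 | apply Cmod_cosh_coef_le].
Qed.

Lemma ex_series_of_ratio_le_half (b : nat -> R) (J : nat) :
  (forall j, 0 <= b j)%R -> (forall j, (J <= j)%nat -> b (S j) <= b j / 2)%R -> ex_series b.
Proof.
  intros Hpos Hratio.
  assert (Hgeom : forall i, (b (J + i)%nat <= b J * (/ 2) ^ i)%R).
  { induction i as [|i IH]; [rewrite Nat.add_0_r; simpl; lra |].
    replace (J + S i)%nat with (S (J + i)) by lia.
    eapply Rle_trans; [apply Hratio; lia |]. simpl. lra. }
  apply (ex_series_incr_n b J).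
  apply (ex_series_le (V := R_CompleteNormedModule) _ (fun i => b J * (/ 2) ^ i)%R).
  - intros i. change (Rabs (b (J + i)%nat) <= b J * (/ 2) ^ i)%R.
    rewrite Rabs_pos_eq by apply Hpos. apply Hgeom.
  - apply (ex_series_scal_l (V := R_NormedModule) (b J) (fun i => (/ 2) ^ i)%R), ex_series_geom.
    rewrite Rabs_pos_eq; lra.
Qed.

Lemma kummer_ratio_bound (a c : C) (r : R) : 0 <= r ->
  exists J, forall j, (J <= j)%nat -> (2 * r * Cmod (a + Cn j) <= Cmod (c + Cn j) * INR (S j))%R.
Proof.
  intros Hr. pose proof (Cmod_ge_0 a). pose proof (Cmod_ge_0 c).
  (* beyond X, |c + j| >= j / 2, |a| <= j and j + 1 >= 8 r *)
  set (X := (2 * Cmod c + Cmod a + 8 * r + 1)%R).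
  destruct (nfloor_ex X) as [J HJ]; [unfold X; lra |].
  exists (S J). intros j Hj.
  assert (HjX : (X < INR j)%R) by (apply le_INR in Hj; rewrite S_INR in Hj; lra).
  assert (Ha : (Cmod (a + Cn j) <= Cmod a + INR j)%R) by (rewrite <- Cmod_Cn; apply Cmod_triangle).
  assert (Hc : (INR j - Cmod c <= Cmod (c + Cn j))%R).
  { rewrite <- Cmod_Cn. replace (Cn j) with (c + Cn j + - c) at 1 by ring.
    pose proof (Cmod_triangle (c + Cn j) (- c)) as Ht. rewrite Cmod_opp in Ht. lra. }
  rewrite S_INR. unfold X in HjX.
  assert (INR j / 2 * (INR j + 1) <= Cmod (c + Cn j) * (INR j + 1))%R by
    (apply Rmult_le_compat_r; lra).
  nra.
Qed.

Lemma ex_series_Cmod_kummer_coef (a c : C) (hc : forall k, c <> - Cn k) (z : C) :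
  ex_series (fun k => Cmod (kummer_coef a c k * z ^ k)).
Proof.
  set (m := kummer_coef a c). set (b := fun k => Cmod (m k * z ^ k)).
  destruct (kummer_ratio_bound a c (Cmod z) (Cmod_ge_0 z)) as [J HJ].
  apply (ex_series_of_ratio_le_half b J); [intros j; apply Cmod_ge_0 |].
  intros j Hj.
  assert (HQ : (0 < Cmod (c + Cn j) * INR (S j))%R).
  { apply Rmult_lt_0_compat; [apply Cmod_gt_0, Cplus_Cn_neq_0, hc | apply lt_0_INR; lia]. }
  assert (E : (b (S j) * (Cmod (c + Cn j) * INR (S j)) = b j * (Cmod z * Cmod (a + Cn j)))%R).
  { unfold b. rewrite <- Cmod_Cn, <- !Cmod_mult.
    replace (m (S j) * z ^ S j * ((c + Cn j) * Cn (S j)))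
      with ((c + Cn j) * deriv_coef m j * z ^ S j) by (unfold deriv_coef; ring).
    unfold m. rewrite kummer_coef_deriv by exact hc. f_equal. rewrite Cpow_S. ring. }
  apply (Rmult_le_reg_r _ _ _ HQ). rewrite E.
  pose proof (HJ j Hj). assert (0 <= b j)%R by apply Cmod_ge_0. nra.
Qed.

Lemma is_series_KummerM (a c : C) (hc : forall k, c <> - Cn k) (z : C) :
  is_Cseries (fun k => kummer_coef a c k * z ^ k) (KummerM a c z).
Proof. apply is_series_Cpsum, ex_series_Cmod_kummer_coef, hc. Qed.

Lemma is_series_cosh_kummer (a c p : C) (hc : forall k, c <> - Cn k) (z : C) :
  is_Cseries (fun n => cauchy_prod (cosh_coef p) (kummer_coef a c) n * z ^ n)
    (Ccosh (p * z) * KummerM a c z).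
Proof.
  eapply is_series_ext; [intros n; apply cauchy_prod_pow |].
  apply is_series_cauchy_prod.
  - apply is_series_Ccosh.
  - now apply is_series_KummerM.
  - apply ex_series_Cmod_cosh_coef.
  - now apply ex_series_Cmod_kummer_coef.
Qed.

Theorem theorem2p10 (a c p : C) (u : nat -> C)
  (hc : forall k : nat, c <> - Cn k)
  (hc2 : c <> Cn 2)
  (hu : forall z : C, is_pseries u z (Ccosh (p * z) * KummerM a c z)) :
  u 0%nat = 1 /\
  u 1%nat = a / c /\
  u 2%nat = a * (a + 1) / (Cn 2 * c * (c + 1)) + p ^ 2 / Cn 2 /\
  u 3%nat = a * p ^ 2 / (Cn 2 * c)
            + a * (a + 1) * (a + Cn 2) / (Cn 6 * c * (c + 1) * (c + Cn 2)) /\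
  u 4%nat = a * (a + 1) * p ^ 2 / (Cn 4 * c * (c + 1))
            + a * (a + 1) * (a + Cn 2) * (a + Cn 3)
              / (Cn 24 * c * (c + 1) * (c + Cn 2) * (c + Cn 3))
            + p ^ 4 / Cn 24 /\
  u 5%nat = a * p ^ 4 / (Cn 24 * c)
            + a * (a + 1) * (a + Cn 2) * p ^ 2 / (Cn 12 * c * (c + 1) * (c + Cn 2))
            + a * (a + 1) * (a + Cn 2) * (a + Cn 3) * (a + Cn 4)
              / (Cn 120 * c * (c + 1) * (c + Cn 2) * (c + Cn 3) * (c + Cn 4)) /\
  (forall n : nat, (5 <= n)%nat ->
     u (S n) = sum_n (fun i => beta a c p i n * u (n - i)%nat) 5).
Proof.
  assert (Hu : forall n, u n = cauchy_prod (cosh_coef p) (kummer_coef a c) n).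
  { apply (pseries_coef_unique _ _ (fun t => Ccosh (p * RtoC t) * KummerM a c (RtoC t)));
      intros t.
    - exact (is_pseries_C _ _ _ (hu (RtoC t))).
    - exact (is_series_cosh_kummer a c p hc (RtoC t)). }
  rewrite !Hu. repeat split; try (clear - hc; solve_initial_coef hc).
  intros n hn. rewrite Hu, cosh_kummer_recurrence by assumption.
  apply sum_n_ext. intros i. now rewrite Hu.
Qed.
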